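(* Let $\mathcal{A}$ and $\mathcal{B}$ be semi-classical test spaces with outcome sets $X,Y$, and let $\omega$ be a probability weight on $\mathcal{A}\times\mathcal{B}$. If $\omega$ is both non-signaling and dispersion-free, then $\omega=\alpha\otimes\beta$, i.e. $\omega(x,y)=\alpha(x)\beta(y)$ for all $x\in X,y\in Y$, where $\alpha$ and $\beta$ are dispersion-free probability weights on $\mathcal{A}$ and $\mathcal{B}$ respectively.
   Context: A test space is an irredundant collection of nonempty sets (tests); it is semi-classical if distinct tests are disjoint. A probability weight is a function into $[0,1]$ summing to $1$ over each test; it is dispersion-free if it takes only the values $0$ and $1$. $\mathcal{A}\times\mathcal{B}=\{E\times F:E\in\mathcal{A},F\in\mathcal{B}\}$. A probability weight $\omega$ on $\mathcal{A}\times\mathcal{B}$ is non-signaling if $\sum_{x\in E}\omega(x,y)$ is independent of $E\in\mathcal{A}$ for each $y$ and $\sum_{y\in F}\omega(x,y)$ is independent of $F\in\mathcal{B}$ for each $x$. *)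

From HB Require Import structures.
From mathcomp Require Import all_boot all_order all_algebra.
From mathcomp Require Import all_classical all_reals.
From mathcomp Require Import ereal esum.
Set Implicit Arguments. Unset Strict Implicit. Unset Printing Implicit Defensive.
Import Order.TTheory GRing.Theory Num.Theory.
Local Open Scope classical_set_scope.
Local Open Scope ring_scope.

Definition test_space (X : choiceType) (A : set (set X)) : Prop :=
  (forall E, A E -> E !=set0) /\
  (forall E F, A E -> A F -> E `<=` F -> E = F).

Definition semi_classical (X : choiceType) (A : set (set X)) : Prop :=
  forall E F, A E -> A F -> E <> F -> E `&` F = set0.

Definition outcomes (X : choiceType) (A : set (set X)) : set X :=
  \bigcup_(E in A) E.

Definition prob_weight (R : realType) (X : choiceType) (A : set (set X)) (w : X -> R)
  : Prop :=
  (forall x, outcomes A x -> 0 <= w x <= 1) /\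
  (forall E, A E -> (\esum_(x in E) (w x)%:E)%E = 1%E).

Definition dispersion_free (R : realType) (X : choiceType) (A : set (set X)) (w : X -> R)
  : Prop :=
  forall x, outcomes A x -> w x = 0 \/ w x = 1.

Definition prod_ts (X Y : choiceType) (A : set (set X)) (B : set (set Y))
  : set (set (X * Y)) :=
  [set G | exists E F, [/\ A E, B F & G = E `*` F]].

Definition non_signaling (R : realType) (X Y : choiceType) (A : set (set X))
  (B : set (set Y)) (w : X * Y -> R) : Prop :=
  (forall y, outcomes B y -> forall E E', A E -> A E' ->
     (\esum_(x in E) (w (x, y))%:E)%E = (\esum_(x in E') (w (x, y))%:E)%E) /\
  (forall x, outcomes A x -> forall F F', B F -> B F' ->
     (\esum_(y in F) (w (x, y))%:E)%E = (\esum_(y in F') (w (x, y))%:E)%E).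

From HB Require Import structures.
From mathcomp Require Import all_boot all_order all_algebra.
From mathcomp Require Import all_classical all_reals.
From mathcomp Require Import ereal esum.
Import Order.TTheory GRing.Theory Num.Theory.
Local Open Scope classical_set_scope.
Local Open Scope ring_scope.

(* A dispersion-free weight is the indicator of a set of outcomes meeting each
   test in exactly one point.  For w on A x B, every test E x F thus contains
   exactly one pair (x, y) with w (x, y) = 1; then the row sum of w (x, _)
   over F is 1, hence by non-signaling its sum over any other test F' is 1 as
   well, so x is paired with a point of every test of B.  The projections of
   the support of w are therefore dispersion-free weights a on A and b on B.
   If a x = b y = 1 for x in E and y in F, there are y' in F and x' in E with
   w (x, y') = 1 and w (x', y) = 1, and uniqueness of the pair in E x F gives
   x' = x, y' = y; so w = a * b.  When A or B has no test the factorisation is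
   vacuous, and semi-classicality provides a and b by picking one outcome in
   each test. *)

Section esum01.
Context {R : realType} {T : choiceType}.
Implicit Types (S : set T) (a : T -> \bar R) (f : T -> R).

Lemma esum_ge_term S a x : S x -> (a x <= \esum_(i in S) a i)%E.
Proof.
move=> Sx; apply: esum_ge; exists [set x]; last by rewrite fsbig_set1.
by split; [exact: finite_set1 | move=> _ ->].
Qed.

Lemma esum_setD1 {S a x} : S x -> (forall y, S y -> 0 <= a y)%E ->
  \esum_(i in S) a i = (a x + \esum_(i in S `\ x) a i)%E.
Proof.
move=> Sx a_ge0; rewrite (esumID [set x]) // setIidr => [|_ -> //].
by rewrite esum_set1 ?a_ge0.
Qed.

Lemma esum01_eq1 {S f} : (forall x, S x -> f x = 0 \/ f x = 1) ->
  \esum_(x in S) (f x)%:E = 1%E <-> exists! x, S x /\ f x = 1.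
Proof.
move=> f01; have f_ge0 x : S x -> (0 <= (f x)%:E)%E by case/f01 => ->.
split=> [sum1 | [x [[Sx fx1] x_uniq]]]; last first.
  rewrite (esum_setD1 Sx) // fx1 esum1 ?adde0 // => y [Sy y_neq_x].
  by case: (f01 y Sy) => [->|fy1] //; case: y_neq_x; apply/esym/x_uniq.
have [x [Sx fx1]] : exists x, S x /\ f x = 1.
  apply: contrapT => no_one; move: sum1; rewrite esum1 => [/eqP|y Sy].
    by rewrite eq_sym eqe oner_eq0.
  by case: (f01 y Sy) => [->|fy1] //; case: no_one; exists y.
exists x; split=> // y [Sy fy1]; apply: contrapT => /eqP x_neq_y.
have : (1 + 1 <= \esum_(i in S) (f i)%:E)%E.
  rewrite (esum_setD1 Sx) // fx1 leeD2l // -fy1.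
  by apply: esum_ge_term; split=> // /eqP; rewrite eq_sym (negPf x_neq_y).
by rewrite sum1 lee_fin gerDl ler10.
Qed.

End esum01.

Lemma esum_prod_swap {R : realType} {X Y : choiceType} (E : set X) (F : set Y)
    (a : X * Y -> \bar R) :
  \esum_(z in F `*` E) a (z.2, z.1) = \esum_(z in E `*` F) a z.
Proof.
rewrite (reindex_esum (F `*` E) _ (fun z => (z.2, z.1))) //; split=> //=.
- by move=> [y x] [].
- by move=> [y1 x1] [y2 x2] /= _ _ [-> ->].
- by move=> [x y] [Ex Fy]; exists (y, x).
Qed.

Lemma natr_bool01 (R : pzSemiRingType) (b : bool) :
  b%:R = 0 :> R \/ b%:R = 1 :> R.
Proof. by case: b; [right | left]. Qed.

Lemma bool_prob_weight (R : realType) (X : choiceType) (A : set (set X))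
    (P : X -> Prop) :
    (forall E, A E -> exists! x, E x /\ P x) ->
  prob_weight A (fun x => `[< P x >]%:R : R).
Proof.
move=> one_in_test; split=> [x _ | E AE].
  by case: (natr_bool01 R `[< P x >]) => ->; rewrite ?lexx ?ler01.
apply/esum01_eq1 => [x _ | ]; first exact: natr_bool01.
have [x [[Ex Px] x_uniq]] := one_in_test E AE.
exists x; split=> [|y [Ey]]; first by split=> //; rewrite asboolT.
case: asboolP => [Py _ | _ /esym/eqP]; [exact: x_uniq | by rewrite oner_eq0].
Qed.

Lemma bool_dispersion_free (R : realType) (X : choiceType) (A : set (set X))
    (P : X -> Prop) :
  dispersion_free A (fun x => `[< P x >]%:R : R).
Proof. by move=> x _; exact: natr_bool01. Qed.

Lemma semi_classical_dispersion_free (R : realType) {X : choiceType}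
    {A : set (set X)} :
    test_space A -> semi_classical A ->
  exists a : X -> R, prob_weight A a /\ dispersion_free A a.
Proof.
move=> [A_ne _] scA.
have /choice[pick pickP] : forall E : {E | A E}, exists x, sval E x.
  by move=> [E AE]; exact: A_ne.
exists (fun x => `[< exists E, x = pick E >]%:R); split; last first.
  exact: bool_dispersion_free.
apply: bool_prob_weight => E AE; exists (pick (exist _ E AE)).
split=> [|x [Ex [[E' AE'] x_pick]]].
  by split; [exact: (pickP (exist _ E AE)) | exists (exist _ E AE)].
subst x; have E'E : E' = E.
  apply: contrapT => /(scA _ _ AE' AE) disjE'E.
  have : (E' `&` E) (pick (exist _ E' AE')).
    by split=> //; exact: (pickP (exist _ E' AE')).
  by rewrite disjE'E.
by subst E'; congr pick; exact: eq_exist.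
Qed.

Lemma outcomes_prod_ts (X Y : choiceType) (A : set (set X)) (B : set (set Y))
    x y :
  outcomes (prod_ts A B) (x, y) <-> outcomes A x /\ outcomes B y.
Proof.
split=> [[_ [E [F [AE BF ->]]] [Ex Fy]] | [[E AE Ex] [F BF Fy]]].
  by split; [exists E | exists F].
by exists (E `*` F); [exists E, F | split].
Qed.

Definition weight_swap {R : realType} {X Y : choiceType} (w : X * Y -> R) :
  Y * X -> R := fun z => w (z.2, z.1).

Section swap.
Context {R : realType} {X Y : choiceType}.
Context {A : set (set X)} {B : set (set Y)} {w : X * Y -> R}.

Lemma prob_weight_swap : prob_weight (prod_ts A B) w ->
  prob_weight (prod_ts B A) (weight_swap w).
Proof.
move=> [w01 w_sum1].
split=> [[y x] /outcomes_prod_ts [By Ax] | _ [F [E [BF AE ->]]]].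
  by apply: w01; apply/outcomes_prod_ts.
by rewrite (esum_prod_swap _ _ (fun z => (w z)%:E)); apply: w_sum1; exists E, F.
Qed.

Lemma non_signaling_swap : non_signaling A B w ->
  non_signaling B A (weight_swap w).
Proof. by case. Qed.

Lemma dispersion_free_swap : dispersion_free (prod_ts A B) w ->
  dispersion_free (prod_ts B A) (weight_swap w).
Proof.
by move=> w_df [y x] /outcomes_prod_ts [By Ax]; apply/w_df/outcomes_prod_ts.
Qed.

End swap.

(* The indicator of the first projection of the support of [w], rather than a
   sum over a test: for non-signaling dispersion-free [w] the two agree. *)
Definition marginal_fst {R : realType} {X Y : choiceType} (B : set (set Y))
    (w : X * Y -> R) (x : X) : R :=
  `[< exists2 y, outcomes B y & w (x, y) = 1 >]%:R.

Definition marginal_snd {R : realType} {X Y : choiceType} (A : set (set X))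
    (w : X * Y -> R) : Y -> R :=
  marginal_fst A (weight_swap w).

Lemma marginal_fst_dispersion_free {R : realType} {X Y : choiceType}
    {A : set (set X)} (B : set (set Y)) (w : X * Y -> R) :
  dispersion_free A (marginal_fst B w).
Proof. exact: bool_dispersion_free. Qed.

Lemma marginal_snd_dispersion_free {R : realType} {X Y : choiceType}
    (A : set (set X)) {B : set (set Y)} (w : X * Y -> R) :
  dispersion_free B (marginal_snd A w).
Proof. exact: marginal_fst_dispersion_free. Qed.

Section marginal_fst.
Context {R : realType} {X Y : choiceType}.
Context {A : set (set X)} {B : set (set Y)} {w : X * Y -> R}.
Hypotheses (w_pw : prob_weight (prod_ts A B) w) (w_ns : non_signaling A B w).
Hypothesis w_df : dispersion_free (prod_ts A B) w.

Lemma weight01 {x y} : outcomes A x -> outcomes B y ->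
  w (x, y) = 0 \/ w (x, y) = 1.
Proof. by move=> Ax By; apply: w_df; apply/outcomes_prod_ts. Qed.

Lemma weight_one_in_test {E F} : A E -> B F ->
  exists! z, (E `*` F) z /\ w z = 1.
Proof.
move=> AE BF; apply/esum01_eq1; last by apply: w_pw.2; exists E, F.
by move=> [x y] [Ex Fy]; apply: weight01; [exists E | exists F].
Qed.

Lemma weight_one_unique {E F x y x' y'} : A E -> B F ->
  E x -> F y -> E x' -> F y' -> w (x, y) = 1 -> w (x', y') = 1 ->
  (x, y) = (x', y').
Proof.
move=> AE BF Ex Fy Ex' Fy' wxy wxy'.
have [z [_ z_uniq]] := weight_one_in_test AE BF.
by rewrite -(z_uniq (x, y)) ?(z_uniq (x', y')).
Qed.

Lemma weight_one_row {E F F' x y} : A E -> B F -> B F' -> E x -> F' y ->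
  w (x, y) = 1 -> exists2 y', F y' & w (x, y') = 1.
Proof.
move=> AE BF BF' Ex F'y wxy.
have row01 G : B G -> forall y, G y -> w (x, y) = 0 \/ w (x, y) = 1.
  by move=> BG y' Gy'; apply: weight01; [exists E | exists G].
have rowF'_sum1 : (\esum_(y in F') (w (x, y))%:E)%E = 1%E.
  apply/(esum01_eq1 (row01 _ BF')); exists y; split=> // y' [F'y' wxy'].
  by case: (weight_one_unique AE BF' Ex F'y Ex F'y' wxy wxy').
have rowF_sum1 : (\esum_(y in F) (w (x, y))%:E)%E = 1%E.
  by rewrite (w_ns.2 x _ F F') //; exists E.
by have [y' [[Fy' wxy'] _]] := (esum01_eq1 (row01 _ BF)).1 rowF_sum1; exists y'.
Qed.

Lemma marginal_fst_eq1 {E F x} : A E -> B F -> E x ->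
  marginal_fst B w x = 1 <-> exists2 y, F y & w (x, y) = 1.
Proof.
move=> AE BF Ex; rewrite /marginal_fst; split=> [|[y Fy wxy]].
  case: asboolP => [[y [F' BF' F'y] wxy] _ | _ /esym/eqP]; last first.
    by rewrite oner_eq0.
  exact: weight_one_row AE BF BF' Ex F'y wxy.
by rewrite asboolT //; exists y => //; exists F.
Qed.

Lemma marginal_fst_prob_weight :
  (exists F, B F) -> prob_weight A (marginal_fst B w).
Proof.
move=> [F BF]; apply: bool_prob_weight => E AE.
have [[x0 y0] [[[Ex0 Fy0] wxy0] _]] := weight_one_in_test AE BF.
exists x0; split=> [|x [Ex [y [F' BF' F'y] wxy]]].
  by split=> //; exists y0 => //; exists F.
have [y' Fy' wxy'] := weight_one_row AE BF BF' Ex F'y wxy.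
by case: (weight_one_unique AE BF Ex0 Fy0 Ex Fy' wxy0 wxy').
Qed.

End marginal_fst.

Section marginal_snd.
Context {R : realType} {X Y : choiceType}.
Context {A : set (set X)} {B : set (set Y)} {w : X * Y -> R}.
Hypotheses (w_pw : prob_weight (prod_ts A B) w) (w_ns : non_signaling A B w).
Hypothesis w_df : dispersion_free (prod_ts A B) w.

Lemma marginal_snd_eq1 {E F y} : A E -> B F -> F y ->
  marginal_snd A w y = 1 <-> exists2 x, E x & w (x, y) = 1.
Proof.
move=> AE BF Fy; exact: (marginal_fst_eq1 (prob_weight_swap w_pw)
  (non_signaling_swap w_ns) (dispersion_free_swap w_df) BF AE Fy).
Qed.

Lemma marginal_snd_prob_weight :
  (exists E, A E) -> prob_weight B (marginal_snd A w).
Proof.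
exact: marginal_fst_prob_weight (prob_weight_swap w_pw)
  (non_signaling_swap w_ns) (dispersion_free_swap w_df).
Qed.

Lemma weight_factor x y : outcomes A x -> outcomes B y ->
  w (x, y) = marginal_fst B w x * marginal_snd A w y.
Proof.
move=> Ax By; have [E AE Ex] := Ax; have [F BF Fy] := By.
have fst_eq1 := marginal_fst_eq1 w_pw w_ns w_df AE BF Ex.
have snd_eq1 := marginal_snd_eq1 AE BF Fy.
have [wxy0 | wxy1] := weight01 w_df Ax By; last first.
  by rewrite wxy1 (fst_eq1.2 _) ?(snd_eq1.2 _) ?mulr1 //; [exists x | exists y].
have [-> | m1] := marginal_fst_dispersion_free B w x Ax; first by rewrite mul0r.
have [-> | m2] := marginal_snd_dispersion_free A w y By; first by rewrite mulr0.
have [y' Fy' wxy'] := fst_eq1.1 m1; have [x' Ex' wx'y] := snd_eq1.1 m2.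
case: (weight_one_unique w_pw w_df AE BF Ex Fy' Ex' Fy wxy' wx'y) => _ yy'.
by move: wxy'; rewrite yy' wxy0 => /eqP; rewrite eq_sym oner_eq0.
Qed.

End marginal_snd.

Theorem lemma3p7 (R : realType) (X Y : choiceType)
  (A : set (set X)) (B : set (set Y)) (w : X * Y -> R) :
  test_space A -> test_space B ->
  semi_classical A -> semi_classical B ->
  prob_weight (prod_ts A B) w ->
  non_signaling A B w -> dispersion_free (prod_ts A B) w ->
  exists (a : X -> R) (b : Y -> R),
    [/\ prob_weight A a, dispersion_free A a,
        prob_weight B b, dispersion_free B b &
        forall x y, outcomes A x -> outcomes B y -> w (x, y) = a x * b y].
Proof.
move=> tsA tsB scA scB w_pw w_ns w_df.
have [[A_ne B_ne] | no_test] := pselect ((exists E, A E) /\ (exists F, B F)).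
  exists (marginal_fst B w), (marginal_snd A w); split.
  - exact: marginal_fst_prob_weight w_pw w_ns w_df B_ne.
  - exact: marginal_fst_dispersion_free.
  - exact: marginal_snd_prob_weight w_pw w_ns w_df A_ne.
  - exact: marginal_snd_dispersion_free.
  - exact: weight_factor w_pw w_ns w_df.
have [a [a_pw a_df]] := semi_classical_dispersion_free R tsA scA.
have [b [b_pw b_df]] := semi_classical_dispersion_free R tsB scB.
exists a, b; split=> // x y [E AE _] [F BF _].
by case: no_test; split; [exists E | exists F].
Qed.
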